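(* Suppose $G\in\mathcal{G}(n,k,p,0)$ has $k$ connected components $C_1,\dots,C_k\subset V=[n]$, each of size $n_0$, with vertex $1\in C_1$. Then the Orthogonal Matching Pursuit algorithm applied to the sparse recovery problem $\arg\min\{\|x\|_0: x\in\mathbb{R}^{n-1},\ L_{-1}x=-\ell_1\}$ returns $x^{\#}=\mathbf{1}_{C_1\setminus\{1\}}$ after $n_0-1$ iterations. Consequently $C_1=\{1\}\cup\mathrm{supp}(x^{\#})$.
   Context: $\mathcal{G}(n,k,p,0)$ is the stochastic block model with $n=kn_0$ vertices partitioned in advance into clusters $C_1,\dots,C_k$ of size $n_0$, each intra-cluster edge present independently with probability $p$ and no inter-cluster edges. $A$ is the adjacency matrix, $D=\mathrm{diag}(d_1,\dots,d_n)$ the degree matrix (degrees assumed positive), $L=I-D^{-1}A$, $\ell_i$ the $i$-th column of $L$, and $L_{-1}$ the matrix $L$ with column $\ell_1$ removed; vectors in $\mathbb{R}^{n-1}$ are indexed by vertices $2,\dots,n$. For $S\subset[n]$, $\mathbf{1}_S$ is the indicator vector of $S$. Orthogonal Matching Pursuit (OMP) with matrix $\Phi$ and vector $y$: set $r^{(0)}=y$, $S^{(0)}=\emptyset$; at iteration $\alpha\ge1$, let $i^{(\alpha)}$ be an index of a largest absolute entry of $\Phi^\top r^{(\alpha-1)}$, $S^{(\alpha)}=S^{(\alpha-1)}\cup\{i^{(\alpha)}\}$, $x^{(\alpha)}=\arg\min\{\|\Phi z-y\|_2:\mathrm{supp}(z)\subset S^{(\alpha)}\}$, $r^{(\alpha)}=y-\Phi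 x^{(\alpha)}$. Here $\Phi=L_{-1}$, $y=-\ell_1$. *)

From HB Require Import structures.
From mathcomp Require Import all_boot all_order all_algebra.
From mathcomp Require Import reals.
Set Implicit Arguments. Unset Strict Implicit. Unset Printing Implicit Defensive.
Import Order.TTheory GRing.Theory Num.Theory.
Local Open Scope ring_scope.

(* Vertices are 'I_N (0-based): the paper's vertex 1 is ord0.
   Vectors of R^m are column vectors 'cV[R]_m. *)

Definition adjmx (R : realType) (N : nat) (e : rel 'I_N) : 'M[R]_N :=
  \matrix_(i, j) (e i j)%:R.

Definition degree (R : realType) (N : nat) (A : 'M[R]_N) (i : 'I_N) : R :=
  \sum_j A i j.
Definition degmx (R : realType) (N : nat) (A : 'M[R]_N) : 'M[R]_N :=
  diag_mx (\row_i degree A i).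

Definition rwlaplacian (R : realType) (N : nat) (A : 'M[R]_N) : 'M[R]_N :=
  1%:M - invmx (degmx A) *m A.

Definition norm2 (R : realType) (m : nat) (v : 'cV[R]_m) : R :=
  Num.sqrt (\sum_i (v i 0) ^+ 2).

Definition supp (R : realType) (m : nat) (v : 'cV[R]_m) : {set 'I_m} :=
  [set i | v i 0 != 0].

(* A run of Orthogonal Matching Pursuit with matrix Phi and vector y:
   S a = S^(a), idx a = i^(a), x a = x^(a), r a = r^(a).
   Ties in the argmax and in the argmin are resolved arbitrarily
   (any valid choice is allowed). *)
Definition omp_run (R : realType) (m p : nat) (Phi : 'M[R]_(m, p)) (y : 'cV[R]_m)
  (S : nat -> {set 'I_p}) (idx : nat -> 'I_p)
  (x : nat -> 'cV[R]_p) (r : nat -> 'cV[R]_m) : Prop :=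
  [/\ r 0%N = y, S 0%N = set0, x 0%N = 0 &
   forall a : nat,
   [/\ (forall j : 'I_p, `|(Phi^T *m r a) j 0| <= `|(Phi^T *m r a) (idx a.+1) 0|),
       S a.+1 = idx a.+1 |: S a,
       supp (x a.+1) \subset S a.+1,
       (forall z : 'cV[R]_p, supp z \subset S a.+1 ->
          norm2 (Phi *m x a.+1 - y) <= norm2 (Phi *m z - y)) &
       r a.+1 = y - Phi *m x a.+1]].

From HB Require Import structures.
From mathcomp Require Import all_boot all_order all_algebra.
From mathcomp Require Import reals.
From mathcomp Require Import lra ring.
Import Order.TTheory GRing.Theory Num.Theory.
Set Implicit Arguments. Unset Strict Implicit. Unset Printing Implicit Defensive.
Local Open Scope ring_scope.

(* Let T be the cluster of vertex 1 with vertex 1 removed, and o its indicator,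
   so that L_{-1} o = -l_1 since L kills the indicator of a cluster.  Two
   properties of L_{-1} relative to T drive OMP: it is injective on vectors
   supported in T (such a vector extended by 0 is L-harmonic, hence constant on
   the connected cluster, and it vanishes at vertex 1), and L_{-1}^T L_{-1} keeps
   vectors supported in T supported in T (L is block diagonal along clusters).
   Hence every residual is L_{-1} u with supp u in T and is nonzero until T is
   exhausted, so its correlations are nonzero somewhere, only on T, and vanish
   on the indices already chosen by least-squares orthogonality: each step adds
   a new index of T, and after |T| steps the least-squares solution is o. *)

Section Support.
Variables (R : realType) (m : nat).
Implicit Types (u v : 'cV[R]_m) (A : {set 'I_m}).

Lemma supp_sub0 u A j : supp u \subset A -> j \notin A -> u j 0 = 0.
Proof. by move=> /subsetP uA /(contra (uA j)); rewrite inE negbK => /eqP. Qed.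

Lemma supp_subB u v : supp (u - v) \subset supp u :|: supp v.
Proof.
apply/subsetP => j; rewrite !inE !mxE.
by have [->|] := eqVneq (u j 0) 0; rewrite ?orbT // add0r oppr_eq0.
Qed.

Lemma supp_eq0 v : supp v = set0 -> v = 0.
Proof.
move=> v0; apply/matrixP => j l; rewrite ord1 mxE.
by apply: (@supp_sub0 _ set0); rewrite ?v0 ?inE.
Qed.

Lemma sumsqr_eq0 v : (\sum_i v i 0 ^+ 2 == 0) = (v == 0).
Proof.
apply/eqP/eqP => [sum0 | ->]; last by rewrite big1 // => i _; rewrite mxE expr0n.
apply/matrixP => i l; rewrite ord1 mxE; apply/eqP; rewrite -sqrf_eq0; apply/eqP.
exact: (psumr_eq0P (fun i _ => sqr_ge0 (v i 0)) sum0).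
Qed.

Lemma norm2_eq0 v : (norm2 v == 0) = (v == 0).
Proof.
rewrite /norm2 sqrtr_eq0 -sumsqr_eq0 eq_le andb_idr // => _.
by apply: sumr_ge0 => i _; apply: sqr_ge0.
Qed.

End Support.

Lemma quadratic_ge0_lin_eq0 (R : realFieldType) (a c : R) :
  0 <= a -> (forall t, 2 * t * c <= t ^+ 2 * a) -> c = 0.
Proof.
move=> a_ge0 lin_le; have a1_neq0 : a + 1 != 0 by rewrite gt_eqF // ltr_wpDl.
have [t tE] : exists t, t * (a + 1) = c by exists (c / (a + 1)); rewrite divfK.
by have := lin_le t; rewrite -tE; nra.
Qed.

Section LeastSquares.
Variables (R : realType) (m p : nat) (Phi : 'M[R]_(m, p)).

Lemma trmx_mulmx_entry (r : 'cV[R]_m) j :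
  (Phi^T *m r) j 0 = \sum_i Phi i j * r i 0.
Proof. by rewrite mxE; apply: eq_bigr => i _; rewrite mxE. Qed.

Lemma gram_mulmx_eq0 (u : 'cV[R]_p) :
  Phi^T *m (Phi *m u) = 0 -> Phi *m u = 0.
Proof.
move=> gram0; apply/eqP; rewrite -sumsqr_eq0.
have -> : \sum_i (Phi *m u) i 0 ^+ 2 = (u^T *m (Phi^T *m (Phi *m u))) 0 0.
  by rewrite mulmxA -trmx_mul mxE; apply: eq_bigr => i _; rewrite !mxE expr2.
by rewrite gram0 mulmx0 mxE.
Qed.

Lemma lsq_residual_orth (y : 'cV[R]_m) (S : {set 'I_p}) (x : 'cV[R]_p) :
  supp x \subset S ->
  (forall z : 'cV[R]_p, supp z \subset S ->
     norm2 (Phi *m x - y) <= norm2 (Phi *m z - y)) ->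
  forall j, j \in S -> (Phi^T *m (y - Phi *m x)) j 0 = 0.
Proof.
move=> xS xmin j jS; rewrite trmx_mulmx_entry; set r := y - Phi *m x.
apply: (@quadratic_ge0_lin_eq0 _ (\sum_i Phi i j ^+ 2)) => [|t].
  by apply: sumr_ge0 => i _; apply: sqr_ge0.
have xtS : supp (x + t *: delta_mx j 0) \subset S.
  apply/subsetP => i; rewrite inE !mxE.
  have [-> //|ij] := eqVneq i j; rewrite mulr0 addr0 => xi.
  by apply: (subsetP xS); rewrite inE.
(* Minimality against [x + t e_j] is [2 t <Phi_j, r> <= t^2 |Phi_j|^2]. *)
have := xmin _ xtS.
have -> : Phi *m (x + t *: delta_mx j 0) - y = t *: col j Phi - r.
  by rewrite mulmxDr -scalemxAr -colE /r opprB addrAC addrC.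
rewrite (_ : Phi *m x - y = - r); last by rewrite opprB.
rewrite /norm2 ler_sqrt; last by apply: sumr_ge0 => i _; apply: sqr_ge0.
rewrite (_ : \sum_i (t *: col j Phi - r) i 0 ^+ 2 = \sum_i (- r) i 0 ^+ 2 +
   (t ^+ 2 * \sum_i Phi i j ^+ 2 - 2 * t * \sum_i Phi i j * r i 0)).
  by rewrite lerDl subr_ge0.
rewrite !mulr_sumr -sumrB -big_split /=.
by apply: eq_bigr => i _; rewrite !mxE; ring.
Qed.

End LeastSquares.

Section OMPExactRecovery.
Variables (R : realType) (m p : nat) (Phi : 'M[R]_(m, p)) (y : 'cV[R]_m).
Variables (T : {set 'I_p}) (o : 'cV[R]_p).
Hypothesis Phi_o : Phi *m o = y.
Hypothesis supp_o : supp o = T.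
Hypothesis Phi_injT : forall u, supp u \subset T -> Phi *m u = 0 -> u = 0.
Hypothesis gram_suppT :
  forall u, supp u \subset T -> supp (Phi^T *m (Phi *m u)) \subset T.
Variables (S : nat -> {set 'I_p}) (idx : nat -> 'I_p).
Variables (x : nat -> 'cV[R]_p) (r : nat -> 'cV[R]_m).
Hypothesis run : omp_run Phi y S idx x r.

Lemma omp_supp a : supp (x a) \subset S a.
Proof.
case: run => _ _ x0 step; case: a => [|a]; last by have [] := step a.
by rewrite x0; apply/subsetP => j; rewrite !inE mxE eqxx.
Qed.

Lemma omp_residualE a : r a = Phi *m (o - x a).
Proof.
case: run => r0 _ x0 step; rewrite mulmxBr Phi_o.
by case: a => [|a]; [rewrite r0 x0 mulmx0 subr0 | have [] := step a].
Qed.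

Lemma omp_residual_orth a j : j \in S a -> (Phi^T *m r a) j 0 = 0.
Proof.
case: run => _ S0 _ step; case: a => [|a]; first by rewrite S0 inE.
have [_ _ xS xmin ->] := step a; exact: lsq_residual_orth.
Qed.

Lemma omp_index_new a : S a \subset T -> (#|S a| < #|T|)%N ->
  idx a.+1 \in T :\: S a.
Proof.
move=> ST ltST; case: run => _ _ _ /(_ a)[idx_max _ _ _ _].
set u := o - x a; set c := Phi^T *m r a.
have uT : supp u \subset T.
  apply: subset_trans (supp_subB _ _) _.
  by rewrite subUset supp_o subxx (subset_trans (omp_supp a)).
have c_neq0 : c != 0.
  apply: contraTneq ltST => c0; rewrite -leqNgt subset_leq_card //.
  have u0 : u = 0.
    by apply: Phi_injT => //; apply/gram_mulmx_eq0; rewrite -omp_residualE.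
  have xo : x a = o by apply/eqP; rewrite eq_sym -subr_eq0 -/u u0.
  by rewrite -supp_o -xo omp_supp.
have c_idx : c (idx a.+1) 0 != 0.
  have [j cj] : exists j, c j 0 != 0.
    apply/existsP; apply: contraR c_neq0 => /existsPn c0.
    by apply/eqP/matrixP => j l; rewrite ord1 [RHS]mxE; apply/eqP/negbNE/c0.
  by rewrite -normr_gt0; apply: lt_le_trans (idx_max j); rewrite normr_gt0.
rewrite inE; apply/andP; split.
  by apply: contra c_idx => /omp_residual_orth ->.
apply: contraR c_idx => idxNT; rewrite /c omp_residualE; apply/eqP.
exact: supp_sub0 (gram_suppT uT) idxNT.
Qed.

Lemma omp_support_grows a : (a <= #|T|)%N -> S a \subset T /\ #|S a| = a.
Proof.
case: run => _ S0 _ step; elim: a => [|a IH] ltaT.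
  by rewrite S0 sub0set cards0.
have [ST cardS] := IH (ltnW ltaT).
have /setDP[idxT idxNS] : idx a.+1 \in T :\: S a.
  by rewrite omp_index_new ?cardS.
have [_ -> _ _ _] := step a.
by rewrite subUset sub1set idxT ST cardsU1 idxNS cardS.
Qed.

Theorem omp_exact_recovery : x #|T| = o.
Proof.
case: run => _ _ x0 step.
have [ST cardS] := omp_support_grows (leqnn #|T|).
have STE : S #|T| = T by apply/eqP; rewrite eqEcard ST cardS leqnn.
case cardT : #|T| => [|a] in ST cardS STE *.
  by rewrite x0 [o]supp_eq0 // supp_o; apply/eqP; rewrite -cards_eq0 cardT.
have [_ _ xS xmin _] := step a.
have /eqP norm2_0 : norm2 (0 : 'cV[R]_m) == 0 by rewrite norm2_eq0.
have /eqP res0 : Phi *m x a.+1 - y == 0.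
  rewrite -norm2_eq0 eq_le sqrtr_ge0 andbT -norm2_0 -(subrr y) -{2}Phi_o.
  by apply: xmin; rewrite STE supp_o.
apply/eqP; rewrite -subr_eq0; apply/eqP/Phi_injT; last by rewrite mulmxBr Phi_o.
apply: subset_trans (supp_subB _ _) _.
by rewrite subUset supp_o subxx -STE xS.
Qed.

End OMPExactRecovery.

Lemma supp_mulmx_block (R : realType) m (M : 'M[R]_m) (A : {set 'I_m})
    (w : 'cV[R]_m) :
  (forall v u, (v \in A) != (u \in A) -> M v u = 0) ->
  supp w \subset A -> supp (M *m w) \subset A.
Proof.
move=> Mblock wA; apply/subsetP => v; apply: contraTT => vNA.
rewrite inE negbK mxE big1 // => u _.
have [uA | uNA] := boolP (u \in A); last by rewrite (supp_sub0 wA uNA) mulr0.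
by rewrite Mblock ?mul0r // uA (negbTE vNA).
Qed.

Section RandomWalkLaplacian.
Variables (R : realType) (n : nat) (e : rel 'I_n).
Hypothesis e_sym : symmetric e.
Hypothesis deg_gt0 : forall v, 0 < degree (adjmx R e) v.

Local Notation L := (rwlaplacian (adjmx R e)).
Local Notation d := (degree (adjmx R e)).

Lemma degreeE v : d v = \sum_u (e v u)%:R.
Proof. by apply: eq_bigr => u _; rewrite mxE. Qed.

Lemma invmx_degmx : invmx (degmx (adjmx R e)) = diag_mx (\row_v (d v)^-1).
Proof.
set D := degmx _; set Di := diag_mx _.
have DDi : D *m Di = 1%:M.
  rewrite mulmx_diag -diag_const_mx; congr diag_mx.
  by apply/rowP => v; rewrite !mxE divff // lt0r_neq0.
have [Dunit _] := mulmx1_unit DDi.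
by rewrite -[RHS]mul1mx -(mulVmx Dunit) -mulmxA DDi mulmx1.
Qed.

Lemma rwlaplacianE v w : L v w = (v == w)%:R - (d v)^-1 * (e v w)%:R.
Proof. by rewrite /rwlaplacian invmx_degmx mul_diag_mx !mxE. Qed.

Lemma rwlaplacian_mulmxE (w : 'cV[R]_n) v :
  (L *m w) v 0 = w v 0 - (d v)^-1 * \sum_u (e v u)%:R * w u 0.
Proof.
rewrite /rwlaplacian mulmxBl mul1mx invmx_degmx mul_diag_mx !mxE mulr_sumr.
by congr (_ - _); apply: eq_bigr => u _; rewrite !mxE mulrA.
Qed.

(* [L w = 0] says that [w a] is the average of [w] over the neighbours of a. *)
Lemma harmonic_nbr_eq (w : 'cV[R]_n) a b : L *m w = 0 ->
  (forall u, e a u -> w u 0 <= w a 0) -> e a b -> w b 0 = w a 0.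
Proof.
move=> Lw0 a_max eab; have da_neq0 : d a != 0 by rewrite lt0r_neq0.
have avg0 : \sum_u (e a u)%:R * (w a 0 - w u 0) = 0.
  have /eqP := congr1 (fun M : 'cV[R]_n => M a 0) Lw0.
  rewrite /= rwlaplacian_mulmxE mxE subr_eq0 => /eqP wa.
  under eq_bigr do rewrite mulrBr.
  by rewrite sumrB -mulr_suml -degreeE {1}wa mulrA mulfV // mul1r subrr.
have terms_ge0 u : true -> 0 <= (e a u)%:R * (w a 0 - w u 0).
  by have [/a_max|] := boolP (e a u); rewrite ?mul0r // mul1r subr_ge0.
have /eqP := psumr_eq0P terms_ge0 avg0 (i := b) isT.
by rewrite eab mul1r subr_eq0 => /eqP.
Qed.

(* Maximum principle: the maximum of [w] over the component of [u] spreads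
   along edges. *)
Lemma harmonic_connect (w : 'cV[R]_n) u v :
  L *m w = 0 -> connect e u v -> w v 0 = w u 0.
Proof.
move=> Lw0; have e_csym := sym_connect_sym e_sym.
have [m um m_max] :=
  @arg_maxP _ R _ u (connect e u) (fun z => w z 0) (connect0 e u).
have nbr_max z t : connect e u z -> e z t -> w t 0 <= w m 0.
  by move=> uz zt; apply: m_max; apply: connect_trans uz (connect1 zt).
pose Q := [pred z | connect e u z ==> (w z 0 == w m 0)].
have Q_closed : closed e Q.
  move=> a b eab; rewrite !inE -(same_connect_r e_csym (connect1 eab)).
  have [ua /= | //] := boolP (connect e u a).
  have ub : connect e u b by apply: connect_trans ua (connect1 eab).
  apply/eqP/eqP => [am | bm].
    by rewrite (harmonic_nbr_eq Lw0 _ eab) // am => t; apply: nbr_max.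
  have eba : e b a by rewrite e_sym.
  by rewrite (harmonic_nbr_eq Lw0 _ eba) // bm => t; apply: nbr_max.
have eq_max z : connect e u z -> w z 0 = w m 0.
  move=> uz; have mz : connect e m z by rewrite -(same_connect e_csym um).
  by move: (closed_connect Q_closed mz); rewrite !inE eqxx uz um => /esym/eqP.
by move=> uv; rewrite !eq_max.
Qed.

Variable C : {set 'I_n}.
Hypothesis C_closed : closed e C.

Lemma rwlaplacian_block v w : (v \in C) != (w \in C) -> L v w = 0.
Proof.
move=> vw_sep; rewrite rwlaplacianE.
have /negbTE-> : v != w by apply: contraNneq vw_sep => ->.
have /negbTE-> : ~~ e v w by apply: contraNN vw_sep => /C_closed ->.
by rewrite mulr0 subr0.
Qed.

Lemma rwlaplacian_indicator : L *m \col_v ((v \in C)%:R) = 0.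
Proof.
apply/matrixP => v l; rewrite ord1 rwlaplacian_mulmxE !mxE.
under eq_bigr => u _ do rewrite mxE.
have [vC | vNC] := boolP (v \in C).
  rewrite (eq_bigr (fun u => (e v u)%:R)) -?degreeE ?mulVf ?subrr ?lt0r_neq0 //.
  move=> u _; have [evu | _] := boolP (e v u); last by rewrite mul0r.
  by rewrite -(C_closed evu) vC mulr1.
rewrite big1 ?mulr0 ?subr0 ?(negbTE vNC) // => u _.
have [evu | _] := boolP (e v u); last by rewrite mul0r.
by rewrite -(C_closed evu) (negbTE vNC) mulr0.
Qed.

End RandomWalkLaplacian.

Section DeleteFirstVertex.
Variables (R : realType) (n : nat).
Implicit Types (u : 'cV[R]_n) (C : {set 'I_n.+1}).

Definition extend0 u : 'cV[R]_n.+1 :=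
  \col_v (if unlift ord0 v is Some j then u j 0 else 0).

Lemma extend0_lift u j : extend0 u (lift ord0 j) 0 = u j 0.
Proof. by rewrite mxE liftK. Qed.

Lemma extend0_ord0 u : extend0 u ord0 0 = 0.
Proof. by rewrite mxE unlift_none. Qed.

Lemma supp_extend0 u C :
  supp u \subset lift ord0 @^-1: C -> supp (extend0 u) \subset C.
Proof.
move=> uC; apply/subsetP => v; rewrite inE; case: (unliftP ord0 v) => [j ->|->].
  by rewrite extend0_lift => uj; have := subsetP uC j; rewrite !inE; apply.
by rewrite extend0_ord0 eqxx.
Qed.

Lemma col'0_mulmx (M : 'M[R]_n.+1) u : col' ord0 M *m u = M *m extend0 u.
Proof.
apply/matrixP => v l; rewrite ord1 [LHS]mxE [RHS]mxE big_ord_recl /=.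
rewrite extend0_ord0 mulr0 add0r.
by apply: eq_bigr => j _; rewrite extend0_lift mxE.
Qed.

Lemma tr_col'0_mulmx (M : 'M[R]_n.+1) (z : 'cV[R]_n.+1) j :
  ((col' ord0 M)^T *m z) j 0 = (M^T *m z) (lift ord0 j) 0.
Proof. by rewrite !mxE; apply: eq_bigr => v _; rewrite !mxE. Qed.

Lemma extend0_indicator C : ord0 \in C ->
  extend0 (\col_j ((lift ord0 j \in C)%:R)) =
  \col_v ((v \in C)%:R) - delta_mx ord0 0.
Proof.
move=> C0; apply/matrixP => v l; rewrite ord1 !mxE.
case: (unliftP ord0 v) => [j ->|->]; rewrite ?liftK ?unlift_none ?mxE.
  by rewrite eq_sym (negbTE (neq_lift _ _)) subr0.
by rewrite C0 eqxx subrr.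
Qed.

Lemma supp_indicator C :
  supp (\col_j ((lift ord0 j \in C)%:R) : 'cV[R]_n) = lift ord0 @^-1: C.
Proof.
apply/setP => j; rewrite !inE mxE.
by case: (lift ord0 j \in C); rewrite ?oner_eq0 ?eqxx.
Qed.

Lemma lift0_imset_preimset C : lift ord0 @: (lift ord0 @^-1: C) = C :\ ord0.
Proof.
apply/setP => v; rewrite !inE; case: (unliftP ord0 v) => [j ->|->].
  by rewrite (mem_imset _ _ (@lift_inj _ ord0)) inE eq_sym neq_lift.
by rewrite eqxx; apply/imsetP => -[j _ /eqP]; rewrite (negbTE (neq_lift _ _)).
Qed.

Lemma card_lift0_preimset C : ord0 \in C -> #|lift ord0 @^-1: C| = #|C|.-1.
Proof.
move=> C0; rewrite (cardsD1 ord0 C) C0 -lift0_imset_preimset card_imset //.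
exact: lift_inj.
Qed.

End DeleteFirstVertex.

Section ClusterRecovery.
Variables (R : realType) (n : nat) (e : rel 'I_n.+1) (C : {set 'I_n.+1}).
Hypothesis e_sym : symmetric e.
Hypothesis deg_gt0 : forall v, 0 < degree (adjmx R e) v.
Hypothesis C_closed : closed e C.
Hypothesis C_connected : {in C &, forall u v, connect e u v}.
Hypothesis C0 : ord0 \in C.

Local Notation L := (rwlaplacian (adjmx R e)).
Local Notation Phi := (col' ord0 L).
Local Notation T := (lift ord0 @^-1: C).
Local Notation o := (\col_j ((lift ord0 j \in C)%:R) : 'cV[R]_n).

Lemma col'0_rwlaplacian_indicator : Phi *m o = - col ord0 L.
Proof.
rewrite col'0_mulmx extend0_indicator // mulmxBr.
by rewrite rwlaplacian_indicator // colE sub0r.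
Qed.

Lemma col'0_rwlaplacian_inj u : supp u \subset T -> Phi *m u = 0 -> u = 0.
Proof.
move=> uT; rewrite col'0_mulmx => Lu0.
apply/matrixP => j l; rewrite ord1 mxE -extend0_lift.
have [jC | jNC] := boolP (lift ord0 j \in C).
  have C0j := C_connected C0 jC.
  by rewrite (harmonic_connect e_sym deg_gt0 Lu0 C0j) extend0_ord0.
exact: supp_sub0 (supp_extend0 uT) jNC.
Qed.

Lemma gram_col'0_rwlaplacian_supp u :
  supp u \subset T -> supp (Phi^T *m (Phi *m u)) \subset T.
Proof.
move=> uT; apply/subsetP => j; apply: contraTT; rewrite !inE negbK => jNC.
rewrite tr_col'0_mulmx col'0_mulmx; apply/eqP/(supp_sub0 _ jNC).
have Lblock := rwlaplacian_block deg_gt0 C_closed.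
apply: supp_mulmx_block => [v w vw|]; first by rewrite mxE Lblock // eq_sym.
exact: supp_mulmx_block (supp_extend0 uT).
Qed.

Theorem omp_rwlaplacian_recovers_cluster S idx (x : nat -> 'cV[R]_n) r :
  omp_run Phi (- col ord0 L) S idx x r -> x #|T| = o.
Proof.
apply: omp_exact_recovery.
- exact: col'0_rwlaplacian_indicator.
- exact: supp_indicator.
- exact: col'0_rwlaplacian_inj.
- exact: gram_col'0_rwlaplacian_supp.
Qed.

End ClusterRecovery.

Theorem mainTheorem2 (R : realType) (n n0 k : nat)
  (C : 'I_k -> {set 'I_n.+1}) (i1 : 'I_k) (e : rel 'I_n.+1)
  (* n+1 = k * n0 vertices, partitioned into k clusters of size n0 *)
  (hn : n.+1 = (k * n0)%N)
  (hsize : forall i, #|C i| = n0)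
  (hdisj : forall i j, i != j -> [disjoint C i & C j])
  (hcover : forall v, exists i, v \in C i)
  (* simple graph *)
  (hsym : symmetric e) (hirr : irreflexive e)
  (* G(n,k,p,0): no inter-cluster edges *)
  (hintra : forall u v, e u v -> exists i, (u \in C i) && (v \in C i))
  (* the connected components of G are exactly C_1, ..., C_k *)
  (hcomp : forall u v, connect e u v <-> exists i, (u \in C i) && (v \in C i))
  (* vertex 1 lies in C_1 *)
  (h1 : ord0 \in C i1)
  (* degrees are positive *)
  (hdeg : forall v, 0 < degree (adjmx R e) v)
  (S : nat -> {set 'I_n}) (idx : nat -> 'I_n)
  (x : nat -> 'cV[R]_n) (r : nat -> 'cV[R]_n.+1)
  (hrun : omp_run (col' ord0 (rwlaplacian (adjmx R e)))
                  (- col ord0 (rwlaplacian (adjmx R e))) S idx x r) :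
  x (n0.-1) = \col_j ((lift ord0 j \in C i1)%:R) /\
  C i1 = ord0 |: [set lift ord0 j | j in supp (x (n0.-1))].
Proof.
have C_closed : closed e (C i1).
  move=> u v /hintra[i /andP[ui vi]].
  have [<- | ii1] := eqVneq i i1; first by rewrite ui vi.
  by rewrite !(disjointFr (hdisj _ _ ii1)).
have C_connected : {in C i1 &, forall u v, connect e u v}.
  by move=> u v ui vi; apply/hcomp; exists i1; rewrite ui vi.
have x_rec :=
  omp_rwlaplacian_recovers_cluster hsym hdeg C_closed C_connected h1 hrun.
rewrite card_lift0_preimset // hsize in x_rec.
by rewrite x_rec supp_indicator lift0_imset_preimset setD1K.
Qed.
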